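(* Let $k$ be a field of characteristic $p >0$, let $d_1,\ldots,d_n$ be positive integers, let $A=k[x_1, \ldots, x_n]/(x_1^{d_1}, \ldots, x_n^{d_n})$, and let $t = \sum_{i=1}^n (d_i - 1)$. Let $m$ be a positive integer such that $m+t <2p$. Then for every integer $i$ with $0\le i \le (t-m)/2$, the map $A_i \to A_{i+m}$ given by $f \mapsto f \cdot (x_1+ \dots +x_n)^m$ is injective.
   Context: $A$ is graded by degree, $A=\bigoplus_{i\ge 0}A_i$, with $A_i$ the image of the homogeneous polynomials of degree $i$. *)

From HB Require Import structures.
From mathcomp Require Import all_boot all_order all_algebra.
From mathcomp Require Import multinomials.mpoly.
Set Implicit Arguments. Unset Strict Implicit. Unset Printing Implicit Defensive.
Import GRing.Theory.
Local Open Scope ring_scope.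

Definition in_mon_ideal (k : fieldType) (n : nat) (d : 'I_n -> nat)
  (f : {mpoly k[n]}) : Prop :=
  exists g : 'I_n -> {mpoly k[n]}, f = \sum_(j < n) g j * 'X_j ^+ d j.

Definition lin_form (k : fieldType) (n : nat) : {mpoly k[n]} :=
  \sum_(j < n) 'X_j.

From HB Require Import structures.
From mathcomp Require Import all_boot all_order all_algebra.
From mathcomp Require Import multinomials.mpoly.
From mathcomp Require Import zify.
Set Implicit Arguments. Unset Strict Implicit. Unset Printing Implicit Defensive.
Import GRing.Theory.
Local Open Scope ring_scope.

(* Replace each variable x_j by a column of boxes (j,0), (j,1), ...  and send
   a polynomial h to the function S |-> a! * h_a on sets S of boxes, where
   a_j is the number of boxes of S in column j.  This turns multiplication by
   x_1 + ... + x_n into the up operator (U F)(S) = sum_(y in S) F(S - y) of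
   the Boolean lattice, and the monomials x^a with all a_j < d_j into subsets
   of the staircase of boxes (j,l) with l < d_j - 1, a set of size t.  It then
   suffices that U^m is injective from level i to level i + m of the Boolean
   lattice of a t-set when 2i + m <= t and (i + m)! is invertible; this is
   proved by induction on t, splitting off a point x and looking separately
   at the sets that contain x and at those that do not. *)

Lemma natr_fact_neq0 (K : idomainType) N :
  (forall c, (0 < c <= N)%N -> c%:R != 0 :> K) -> N`!%:R != 0 :> K.
Proof.
elim: N => [|N IH] hN; first by rewrite oner_eq0.
rewrite factS natrM mulf_neq0 //; first by apply: hN; rewrite /= leqnn.
by apply: IH => c /andP [c0 cN]; apply: hN; rewrite c0 ltnW.
Qed.

Lemma exists_subset_card (T : finType) (X : {set T}) c :
  (c <= #|X|)%N -> exists2 S : {set T}, S \subset X & #|S| = c.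
Proof.
elim: c => [|c IH] hc; first by exists set0; rewrite ?sub0set ?cards0.
have [S sSX cS] := IH (ltnW hc).
have : (0 < #|X :\: S|)%N by rewrite cardsD (setIidPr sSX) cS subn_gt0.
rewrite card_gt0 => /set0Pn [y]; rewrite inE => /andP [yS yX].
exists (y |: S); first by rewrite subUset sub1set yX sSX.
by rewrite cardsU1 yS cS.
Qed.

Section UpOperator.
Variables (K : idomainType) (T : finType).
Implicit Types (F : {set T} -> K) (S X Y Z : {set T}).

Definition up F S := \sum_(y in S) F (S :\ y).
Definition upn m F := iter m up F.
Definition shift x F S := F (x |: S).
Definition vanish X c F := forall S, S \subset X -> #|S| = c -> F S = 0.

Lemma upnS m F S : upn m.+1 F S = \sum_(y in S) upn m F (S :\ y).
Proof. by []. Qed.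

Lemma vanish_upn X c m F : vanish X c F -> vanish X (c + m) (upn m F).
Proof.
move=> F0; elim: m => [|m IH] S sSX cS; first by apply: F0; rewrite // cS addn0.
rewrite upnS big1 // => y yS; apply: IH; first exact: subset_trans (subsetDl _ _) sSX.
by move: (cardsD1 y S); rewrite yS cS; lia.
Qed.

Lemma upn_card m F S : #|S| = m -> upn m F S = F set0 *+ m`!.
Proof.
elim: m S => [|m IH] S cS; first by move/eqP: cS; rewrite cards_eq0 => /eqP ->.
rewrite upnS (eq_bigr (fun _ => F set0 *+ m`!)).
  by rewrite sumr_const cS -mulrnA factS mulnC.
by move=> y yS; apply: IH; move: (cardsD1 y S); rewrite yS cS; lia.
Qed.

Lemma up_setU1 F x S : x \notin S -> up F (x |: S) = F S + up (shift x F) S.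
Proof.
move=> xS; rewrite /up (big_setU1 _ xS) /= setU1K //; congr (_ + _).
apply: eq_bigr => y yS; rewrite /shift; congr F.
apply/setP => z; rewrite !inE; case: (z =P y) => [->|] //=.
by rewrite orbF; apply/esym/negbTE; apply: contraNneq xS => <-.
Qed.

Lemma upn_setU1 m F x S : x \notin S ->
  upn m.+1 F (x |: S) = upn m.+1 (shift x F) S + m.+1%:R * upn m F S.
Proof.
elim: m S => [|m IH] S xS; first by rewrite /upn /= up_setU1 // mul1r addrC.
transitivity (upn m.+1 F S + \sum_(y in S)
    (upn m.+1 (shift x F) (S :\ y) + m.+1%:R * upn m F (S :\ y))).
  rewrite [LHS]up_setU1 //; congr (_ + _); apply: eq_bigr => y yS.
  by rewrite /shift -IH // !inE negb_and xS orbT.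
rewrite big_split -mulr_sumr -!upnS [m.+2%:R]mulrSr mulrDl mul1r.
by rewrite addrCA [upn m.+1 F S + _]addrC.
Qed.

Lemma vanish_setU1 X x c F : x \in X ->
  vanish (X :\ x) c (shift x F) -> vanish (X :\ x) c.+1 F -> vanish X c.+1 F.
Proof.
move=> xX G0 F0 S sSX cS; case xS: (x \in S).
  rewrite -(setD1K xS); apply: G0; first exact: setSD.
  by move: (cardsD1 x S); rewrite xS cS; lia.
apply: F0 => //; apply/subsetP => y yS; rewrite !inE (subsetP sSX) // andbT.
by apply: contraFneq xS => <-.
Qed.

Lemma vanish_upn_shift X x c m F : x \in X -> vanish X c.+1 (upn m.+1 F) ->
  vanish (X :\ x) c (fun Z => upn m.+1 (shift x F) Z + m.+1%:R * upn m F Z).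
Proof.
move=> xX F0 Z sZX cZ.
have xZ : x \notin Z by apply/negP => /(subsetP sZX); rewrite !inE eqxx.
rewrite -upn_setU1 //; apply: F0; last by rewrite cardsU1 xZ cZ.
by rewrite subUset sub1set xX (subset_trans sZX (subsetDl _ _)).
Qed.

Lemma vanish_upnS_shift X x c m F : x \in X -> vanish X c.+1 (upn m.+1 F) ->
  vanish (X :\ x) c.+1 (upn m.+2 (shift x F)).
Proof.
move=> xX F0 Y sYX cY.
have /(_ Y sYX) := vanish_upn (m := 1) (vanish_upn_shift xX F0).
rewrite addn1 => /(_ cY); rewrite /upn /= /up big_split /= -mulr_sumr.
rewrite -[\sum_(y in Y) _ F _]upnS F0 ?mulr0 ?addr0 //.
exact: subset_trans sYX (subsetDl _ _).
Qed.

Theorem upn_vanish_inj X i m F : (2 * i + m <= #|X|)%N ->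
  (forall c, (0 < c <= i + m)%N -> c%:R != 0 :> K) ->
  vanish X (i + m) (upn m F) -> vanish X i F.
Proof.
move cX: #|X| => N; elim: N X i m F cX => [|N IH] X i m F cX him hK F0.
  have [i0 m0] : i = 0%N /\ m = 0%N by lia.
  by move: F0; rewrite i0 m0.
case: i him hK F0 => [|i] him hK F0.
  move=> S _ /eqP; rewrite cards_eq0 => /eqP ->.
  have [Y sYX cY] := exists_subset_card (c := m) (X := X) (ltac:(lia)).
  apply/eqP; have := F0 Y sYX cY; rewrite (upn_card _ cY) => /eqP.
  by rewrite -mulr_natr mulf_eq0 (negbTE (natr_fact_neq0 _)) ?orbF.
case: m him hK F0 => [|m] him hK; first by rewrite addn0.
rewrite addnS => F0; have : (0 < #|X|)%N by rewrite cX.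
rewrite card_gt0 => /set0Pn [x xX].
have cX' : #|X :\ x| = N by move: (cardsD1 x X); rewrite xX cX; lia.
(* Recursion on X :\ x with (i, m + 2) for the sets through x, then with
   (i + 1, m) for the sets avoiding x; both keep 2i + m <= #|X :\ x|. *)
have G0 : vanish (X :\ x) i (shift x F).
  apply: (IH _ i m.+2 _ cX'); [lia | move=> c hc; apply: hK; lia |].
  by rewrite !addnS -addSn; apply: vanish_upnS_shift.
apply: (vanish_setU1 xX G0).
apply: (IH _ i.+1 m _ cX'); [lia | move=> c hc; apply: hK; lia |].
move=> Z sZX cZ; have /eqP := vanish_upn_shift xX F0 sZX cZ.
rewrite (vanish_upn (m := m.+1) G0) ?addnS -?addSn // add0r mulf_eq0 => /orP [|/eqP //].
by rewrite (negbTE (hK m.+1 _)) //; lia.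
Qed.

End UpOperator.

Lemma mcoeffMXE (R : ringType) n (h : {mpoly R[n]}) u b :
  (h * 'X_[u])@_b = if (u <= b)%MM then h@_(b - u) else 0.
Proof.
case: ifP => ub; first by rewrite -{1}(submK ub) addmC mcoeffMX.
apply/eqP; rewrite mcoeff_eq0 (perm_mem (msuppMX _ _)).
by apply/negP => /mapP [b' _ bE]; move: ub; rewrite bE lem_addr.
Qed.

Section MonomialIdeal.
Variables (k : fieldType) (n : nat) (d : 'I_n -> nat).

Definition first_exceeding (a : 'X_{1..n}) := [pick j | (d j <= a j)%N].

Lemma in_mon_idealE (h : {mpoly k[n]}) :
  in_mon_ideal d h <-> forall b : 'X_{1..n}, (forall j, b j < d j)%N -> h@_b = 0.
Proof.
split=> [[g ->] b bd|h0].
  rewrite raddf_sum /=; apply: big1 => j _.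
  rewrite mpolyXn mcoeffMXE; case: ifP => // /mnm_lepP /(_ j).
  by rewrite mulmnE mnm1E eqxx mul1n leqNgt bd.
have exceed a : a \in msupp h ->
    exists2 j, first_exceeding a = Some j & (d j <= a j)%N.
  rewrite mcoeff_msupp /first_exceeding; case: pickP => [j dj|dn]; first by exists j.
  by rewrite h0 ?eqxx // => j; rewrite ltnNge dn.
exists (fun j => \sum_(a <- msupp h | first_exceeding a == Some j)
  h@_a *: 'X_[a - U_(j) *+ d j]).
rewrite [LHS]mpolyE (eq_bigr (fun j => \sum_(a <- msupp h)
    if first_exceeding a == Some j then h@_a *: 'X_[a] else 0)); last first.
  move=> j _; rewrite mulr_suml big_mkcond /=; apply: eq_big_seq => a ha.
  case: ifP => // /eqP aj; rewrite -scalerAl mpolyXn -mpolyXD submK //.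
  apply/mnm_lepP => l; rewrite mulmnE mnm1E.
  case: (j =P l) => [<-|]; last by rewrite mul0n.
  by have [j' + dj'] := exceed a ha; rewrite aj => -[->]; rewrite mul1n.
rewrite exchange_big /=; apply: eq_big_seq => a ha.
have [j aj _] := exceed a ha; rewrite (bigD1 j) //= aj eqxx big1 ?addr0 // => l lj.
by case: ifP => // /eqP [] /esym /eqP; rewrite (negbTE lj).
Qed.

End MonomialIdeal.

Section BoxEncoding.
Variables (k : fieldType) (n N : nat).
Local Notation box := ('I_n * 'I_N)%type.
Implicit Types (h : {mpoly k[n]}) (a b : 'X_{1..n}) (S : {set box}).

Definition column S j := [set u in S | u.1 == j].
Definition profile S : 'X_{1..n} := [multinom #|column S j| | j < n].
Definition staircase a : {set box} := [set u : box | (u.2 < a u.1)%N].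
Definition mfact a := (\prod_(j < n) (a j)`!)%N.
Definition encode h S : k := (mfact (profile S))%:R * h@_(profile S).

Lemma profileE S j : profile S j = #|column S j|.
Proof. by rewrite mnmE. Qed.

Lemma card_profile S : #|S| = mdeg (profile S).
Proof.
rewrite mdegE -sum1_card (partition_big (fun u : box => u.1) predT) //=.
apply: eq_bigr => j _; rewrite profileE -sum1_card; apply: eq_bigl => u.
by rewrite !inE.
Qed.

Lemma profileS S S' : S \subset S' -> (profile S <= profile S')%MM.
Proof.
move=> sSS'; apply/mnm_lepP => j; rewrite !profileE subset_leq_card //.
by apply/subsetP => u; rewrite !inE => /andP [/(subsetP sSS') -> ->].
Qed.

Lemma profile_staircase a : (forall j, a j <= N)%N -> profile (staircase a) = a.
Proof.
move=> aN; apply/mnmP => j; rewrite profileE.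
have -> : column (staircase a) j = [set (j, widen_ord (aN j) l) | l : 'I_(a j)].
  apply/setP => -[j' l]; rewrite !inE /=.
  apply/andP/imsetP => [[lt /eqP ej]|[l' _ [-> ->]]]; last by rewrite /= eqxx ltn_ord.
  by subst j'; exists (Ordinal lt) => //; congr pair; apply: val_inj.
by rewrite card_imset ?card_ord // => l1 l2 [] /val_inj.
Qed.

Lemma staircaseS a b : (a <= b)%MM -> staircase a \subset staircase b.
Proof.
move/mnm_lepP=> ab; apply/subsetP => u; rewrite !inE => ua.
exact: leq_trans ua (ab _).
Qed.

Lemma card_staircase a : (forall j, a j <= N)%N -> #|staircase a| = mdeg a.
Proof. by move=> aN; rewrite card_profile profile_staircase. Qed.

Lemma profile_setD1 S y : y \in S -> profile (S :\ y) = (profile S - U_(y.1))%MM.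
Proof.
move=> yS; apply/mnmP => j; rewrite mnmBE mnm1E !profileE.
case: (y.1 =P j) => [yj|yj].
  have -> : column (S :\ y) j = column S j :\ y.
    by apply/setP => u; rewrite !inE andbA.
  by move: (cardsD1 y (column S j)); rewrite !inE yS yj eqxx /=; lia.
rewrite subn0; congr #|pred_of_set _|; apply/setP => u; rewrite !inE.
by case: (u =P y) => [->|] //=; rewrite (introF eqP yj) andbF.
Qed.

Lemma sum_over_columns S (phi : 'I_n -> k) :
  \sum_(y in S) phi y.1 = \sum_(j < n) phi j *+ profile S j.
Proof.
rewrite (partition_big (fun y : box => y.1) predT) //=; apply: eq_bigr => j _.
rewrite profileE -sumr_const; apply: eq_big => u; first by rewrite !inE.
by case/andP => _ /eqP ->.
Qed.

Lemma mfactB a j : (0 < a j)%N -> mfact a = (a j * mfact (a - U_(j)))%N.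
Proof.
move=> aj; rewrite /mfact (bigD1 j) //= [in RHS](bigD1 j) //= mulnA.
congr (_ * _)%N.
  by rewrite mnmBE mnm1E eqxx subn1; case: (a j) aj => // c _; rewrite factS.
by apply: eq_bigr => l lj; rewrite mnmBE mnm1E eq_sym (negbTE lj) subn0.
Qed.

Lemma natr_mfact_neq0 a :
  (forall c, (0 < c <= mdeg a)%N -> c%:R != 0 :> k) -> (mfact a)%:R != 0 :> k.
Proof.
move=> ha; rewrite natr_prod; apply/prodf_neq0 => j _; apply: natr_fact_neq0.
move=> c /andP [c0 caj]; apply: ha; rewrite c0 (leq_trans caj) //.
by rewrite mdegE (bigD1 j) //= leq_addr.
Qed.

Lemma mcoeffM_lin_form h b :
  (h * lin_form k n)@_b = \sum_(j < n) if (0 < b j)%N then h@_(b - U_(j)) else 0.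
Proof.
rewrite /lin_form mulr_sumr raddf_sum /=; apply: eq_bigr => j _.
rewrite mcoeffMXE; congr (if _ then _ else _).
apply/mnm_lepP/idP => [/(_ j)|bj l]; first by rewrite mnm1E eqxx.
by rewrite mnm1E; case: (j =P l) => [<-|].
Qed.

Lemma up_encode h : up (encode h) =1 encode (h * lin_form k n).
Proof.
move=> S; rewrite /up /encode mcoeffM_lin_form mulr_sumr.
under eq_bigr => y yS do rewrite profile_setD1 //.
rewrite (sum_over_columns S (fun j =>
  (mfact (profile S - U_(j)))%:R * h@_(profile S - U_(j)))).
apply: eq_bigr => j _; case: ifP => [aj|].
  by rewrite (mfactB aj) natrM -[_ *+ profile S j]mulr_natl mulrA.
by move/negbT; rewrite -leqNgt leqn0 => /eqP ->; rewrite mulr0 mulr0n.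
Qed.

Lemma upn_encode m h : upn m (encode h) =1 encode (h * lin_form k n ^+ m).
Proof.
elim: m => [|m IH] S; first by rewrite expr0 mulr1.
rewrite upnS (eq_bigr _ (fun y _ => IH (S :\ y))).
by rewrite -/(up _ S) up_encode exprSr mulrA.
Qed.

End BoxEncoding.

Theorem theorem2p2 (k : fieldType) (p : nat) (n : nat) (d : 'I_n -> nat)
  (m i : nat) :
  p \in [pchar k] ->
  (forall j, 0 < d j)%N ->
  (0 < m)%N ->
  (m + \sum_(j < n) (d j).-1 < 2 * p)%N ->
  (2 * i + m <= \sum_(j < n) (d j).-1)%N ->
  forall f : {mpoly k[n]}, f \is i.-homog ->
    in_mon_ideal d (f * lin_form k n ^+ m) -> in_mon_ideal d f.
Proof.
move=> chp d_gt0 _ mt it f homf /in_mon_idealE fL0; apply/in_mon_idealE => a ad.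
set t := (\sum_(j < n) (d j).-1)%N in mt it.
have unit_small c : (0 < c <= i + m)%N -> c%:R != 0 :> k.
  (* 2 (i + m) <= m + t < 2 p *)
  by case/andP=> c0 cim; rewrite -(dvdn_pcharf chp) gtnNdvd //; lia.
pose top := [multinom (d j).-1 | j < n].
have top_le_t j : (top j <= t)%N by rewrite mnmE /t (bigD1 j) //= leq_addr.
have top_lt_d j : (top j < d j)%N by rewrite mnmE prednK.
have a_le_top : (a <= top)%MM by apply/mnm_lepP => j; rewrite mnmE -ltnS prednK.
have it_top : (2 * i + m <= #|staircase t top|)%N.
  by rewrite card_staircase // mdegE; under eq_bigr do rewrite mnmE.
have top_vanish : vanish (staircase t top) (i + m) (upn m (encode f)).
  move=> Y sY _; rewrite upn_encode /encode fL0 ?mulr0 // => j.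
  apply: leq_ltn_trans (top_lt_d j); move/mnm_lepP: (profileS sY) => /(_ j).
  by rewrite profile_staircase.
have [dega|/(dhomog_nemf_coeff homf) //] := eqVneq (mdeg a) i.
have a_le_t j : (a j <= t)%N by apply: leq_trans (top_le_t j); apply/mnm_lepP.
have /eqP := upn_vanish_inj it_top unit_small top_vanish (staircaseS t a_le_top)
  (etrans (card_staircase a_le_t) dega).
rewrite /encode profile_staircase // mulf_eq0 (negbTE (natr_mfact_neq0 _)) => [/eqP //|].
by move=> c /andP [c0 ca]; apply: unit_small; rewrite c0 -dega (leq_trans ca) ?leq_addr.
Qed.
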